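(* Let $q=p^{m_0}$ with $p$ prime, let $R$ be a commutative ring of characteristic $p$, and let $\rho$ be a permutation of $\{0,1,2,\ldots\}$. The $R$-linear map $\rho_\ast:R\{\{u\}\}\to R\{\{u\}\}$ defined by $$\rho_\ast\Big(\sum_{i\ge0}a_i\frac{u^i}{i!}\Big):=\sum_{i\ge0}a_i\frac{u^{\rho_\ast i}}{(\rho_\ast i)!}$$ is an $R$-algebra automorphism of $R\{\{u\}\}$.
   Context: For a nonnegative integer $i=\sum_j c_jq^j$ ($0\le c_j<q$), $\rho_\ast i:=\sum_j c_jq^{\rho(j)}$; $i\mapsto\rho_\ast i$ is a bijection of the nonnegative integers. $R\{\{u\}\}$ is the $R$-algebra of formal divided power series $\sum_{i\ge0}a_i\frac{u^i}{i!}$ ($a_i\in R$), where $\frac{u^i}{i!}$ are formal symbols, addition is coefficientwise, and multiplication is determined by $\frac{u^i}{i!}\cdot\frac{u^j}{j!}=\binom{i+j}{i}\frac{u^{i+j}}{(i+j)!}$. *)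

From mathcomp Require Import all_boot all_algebra.
Set Implicit Arguments. Unset Strict Implicit. Unset Printing Implicit Defensive.
Import GRing.Theory.
Local Open Scope ring_scope.

(* Formal divided power series R{{u}}: sum_i a_i u^i/i! is represented by
   its coefficient sequence a : nat -> R. *)
Definition dps (R : comNzRingType) := nat -> R.

Definition dps_add (R : comNzRingType) (a b : dps R) : dps R := fun n => a n + b n.
Definition dps_scale (R : comNzRingType) (c : R) (a : dps R) : dps R := fun n => c * a n.
Definition dps_one (R : comNzRingType) : dps R := fun n => (n == 0%N)%:R.
(* (u^i/i!)(u^j/j!) = C(i+j,i) u^(i+j)/(i+j)! *)
Definition dps_mul (R : comNzRingType) (a b : dps R) : dps R :=
  fun n => \sum_(i < n.+1) ('C(n, i))%:R * a i * b (n - i)%N.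

(* base-q digit c_j of i, and rho_* i = sum_j c_j q^(rho j).
   For q >= 2 all digits at positions j > i vanish, so summing over j <= i
   covers every digit. *)
Definition digit (q i j : nat) : nat := (i %/ q ^ j) %% q.
Definition rho_star (q : nat) (rho : nat -> nat) (i : nat) : nat :=
  \sum_(j < i.+1) digit q i j * q ^ (rho j).

(* F is the map sum a_i u^i/i! |-> sum a_i u^(rho_* i)/(rho_* i)! *)
Definition is_rho_map (R : comNzRingType) (q : nat) (rho : nat -> nat)
  (F : dps R -> dps R) : Prop :=
  forall a i, F a (rho_star q rho i) = a i.

Definition is_Ralg_automorphism (R : comNzRingType) (F : dps R -> dps R) : Prop :=
  [/\ forall a b, F (dps_add a b) = dps_add (F a) (F b),
      forall c a, F (dps_scale c a) = dps_scale c (F a),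
      forall a b, F (dps_mul a b) = dps_mul (F a) (F b),
      F (dps_one R) = dps_one R
    & bijective F].

(* In characteristic p, (1 + X)^q = 1 + X^q, which gives Lucas'
   theorem: C(n, k) is the product of the C(n_j, k_j) over the base-q digits.
   Since rho_* only permutes the digits, it preserves the images in R of all
   binomial coefficients; moreover, when every digit of k is at most the
   corresponding digit of n, rho_*(n - k) = rho_* n - rho_* k, and otherwise
   C(n, k) = 0 in R.  Hence reindexing the product formula of R{{u}} along the
   bijection rho_* shows that a |-> a o rho_*^-1 is multiplicative; it is
   clearly additive, R-linear, unital and bijective, and it is the only map
   satisfying the defining equations. *)

From mathcomp Require Import all_boot all_algebra.
From Stdlib Require Import FunctionalExtensionality.
Set Implicit Arguments. Unset Strict Implicit. Unset Printing Implicit Defensive.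
Import GRing.Theory.

Lemma big_ord_reindex_bij (T : Type) (idx : T) (op : Monoid.com_law idx)
    (f g : nat -> nat) (F : nat -> T) A B :
  cancel f g -> cancel g f ->
  (forall k, A <= k -> F k = idx) -> (forall i, B <= i -> F (f i) = idx) ->
  \big[op/idx]_(i < B) F (f i) = \big[op/idx]_(k < A) F k.
Proof.
move=> fK gK FA FfB; set C := maxn A (\max_(i < B) (f i).+1).
have widenA : \big[op/idx]_(k < A) F k = \big[op/idx]_(k < C) F k.
  rewrite (big_ord_widen _ _ (leq_maxl _ _ : A <= C)) big_mkcond.
  by apply: eq_bigr => k _; case: ltnP => // /FA.
rewrite widenA -!(big_mkord xpredT) -(big_mkord xpredT (fun i => F (f i))).
rewrite /index_iota !subn0 -(big_map f xpredT F).
set s := map f (iota 0 B).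
rewrite -(perm_big _ (permEl (perm_filterC (mem s) (iota 0 C)))) big_cat /=.
rewrite [X in op _ X]big1_seq ?Monoid.mulm1; last first.
  move=> k /andP[_]; rewrite mem_filter => /andP[/= k_notin_s _].
  case: (ltnP (g k) B) => [gkB|/FfB]; last by rewrite gK.
  by case/negP: k_notin_s; rewrite -(gK k); apply: map_f; rewrite mem_iota.
apply: perm_big; apply: uniq_perm.
- by rewrite (map_inj_uniq (can_inj fK)) iota_uniq.
- exact: filter_uniq (iota_uniq _ _).
move=> x; rewrite mem_filter; apply/idP/andP => [xs|[] //]; split => //.
move/mapP: xs => [i]; rewrite mem_iota add0n => /andP[_ iB] ->.
rewrite mem_iota add0n /= leq_max; apply/orP; right.
exact: (leq_bigmax (F := fun i : 'I_B => (f i).+1) (Ordinal iB)).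
Qed.

Section Digits.

Variable q : nat.

Definition from_digits (e : nat -> nat) (K : nat) : nat := \sum_(j < K) e j * q ^ j.

Lemma eq_from_digits e e' K : e =1 e' -> from_digits e K = from_digits e' K.
Proof. by move=> ee'; apply: eq_bigr => j _; rewrite ee'. Qed.

Lemma from_digitsS e K :
  from_digits e K.+1 = e 0 + q * from_digits (fun j => e j.+1) K.
Proof.
rewrite /from_digits big_ord_recl /= expn0 muln1 big_distrr /=; congr (_ + _).
by apply: eq_bigr => j _; rewrite expnS mulnCA.
Qed.

Lemma digit_ord0 n : digit q n 0 = n %% q.
Proof. by rewrite /digit expn0 divn1. Qed.

Lemma digitS n j : digit q n j.+1 = digit q (n %/ q) j.
Proof. by rewrite /digit expnS divnMA. Qed.

Lemma digit0 j : digit q 0 j = 0.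
Proof. by rewrite /digit div0n mod0n. Qed.

Lemma digit_small n j : n < q ^ j -> digit q n j = 0.
Proof. by move=> n_lt; rewrite /digit divn_small // mod0n. Qed.

Hypothesis q_gt1 : 1 < q.
Let q_gt0 : 0 < q := ltnW q_gt1.

Lemma ltn_digit n j : digit q n j < q.
Proof. by rewrite /digit ltn_pmod. Qed.

Lemma leq_ltn_expl n j : n <= j -> n < q ^ j.
Proof. by move=> nj; apply: leq_ltn_trans nj (ltn_expl _ q_gt1). Qed.

Lemma digit_eq0 n j : n <= j -> digit q n j = 0.
Proof. by move=> nj; rewrite digit_small // leq_ltn_expl. Qed.

Lemma digit_from_digits e K j : (forall i, e i < q) ->
  digit q (from_digits e K) j = if j < K then e j else 0.
Proof.
elim: K e j => [|K IH] e j e_lt; first by rewrite /from_digits big_ord0 digit0.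
rewrite from_digitsS; case: j => [|j].
  by rewrite digit_ord0 /= addnC mulnC modnMDl modn_small.
by rewrite digitS addnC mulnC divnMDl // divn_small // addn0 IH.
Qed.

Lemma from_digits_digitE n K :
  from_digits (digit q n) K + q ^ K * (n %/ q ^ K) = n.
Proof.
elim: K n => [|K IH] n; first by rewrite /from_digits big_ord0 expn0 mul1n divn1.
rewrite from_digitsS (eq_from_digits _ (digitS n)) digit_ord0.
rewrite expnS -mulnA divnMA -addnA -mulnDr IH.
by rewrite addnC mulnC -divn_eq.
Qed.

Lemma from_digits_digit n K : n <= K -> from_digits (digit q n) K = n.
Proof.
move=> nK; rewrite -[RHS](from_digits_digitE n K).
by rewrite divn_small ?muln0 ?addn0 // leq_ltn_expl.
Qed.

Lemma eq_digits a b : digit q a =1 digit q b -> a = b.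
Proof.
move=> ab; rewrite -[LHS](@from_digits_digit a (a + b)) ?leq_addr //.
by rewrite -[RHS](@from_digits_digit b (a + b)) ?leq_addl // (eq_from_digits _ ab).
Qed.

Lemma from_digitsB e e' K : (forall j, e' j <= e j) ->
  from_digits e K - from_digits e' K = from_digits (fun j => e j - e' j) K.
Proof.
move=> e'_le; apply/eqP; rewrite -(eqn_add2r (from_digits e' K)) subnK.
  by rewrite -big_split /=; apply/eqP/eq_bigr => j _; rewrite -mulnDl subnK.
by apply: leq_sum => j _; rewrite leq_mul2r e'_le orbT.
Qed.

Lemma digitB n k : (forall j, digit q k j <= digit q n j) ->
  forall j, digit q (n - k) j = digit q n j - digit q k j.
Proof.
move=> k_le j; set K := (n + k + j).+1.
have nK : n <= K by rewrite ltnW // ltnS -addnA leq_addr.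
have kK : k <= K by rewrite ltnW // ltnS addnAC leq_addl.
have -> : n - k = from_digits (fun i => digit q n i - digit q k i) K.
  by rewrite -from_digitsB // !from_digits_digit.
rewrite digit_from_digits; last by move=> i; exact: leq_ltn_trans (leq_subr _ _) (ltn_digit _ _).
by rewrite ltnS leq_addl.
Qed.

End Digits.

Section RhoStar.

Variables (q : nat) (rho rho_inv : nat -> nat).
Hypotheses (q_gt1 : 1 < q) (rhoK : cancel rho rho_inv) (rho_invK : cancel rho_inv rho).

Lemma digit_rho_star i j : digit q (rho_star q rho i) j = digit q i (rho_inv j).
Proof.
set K := maxn (\max_(l < i.+1) (rho l).+1) j.+1.
have digit_free k : K <= k -> digit q i (rho_inv k) * q ^ k = 0.
  rewrite geq_max => /andP[kK _]; case: (ltnP (rho_inv k) i.+1) => [lt_i|le_i].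
    have := leq_bigmax (F := fun l : 'I_i.+1 => (rho l).+1) (Ordinal lt_i).
    by rewrite /= rho_invK => /leq_trans/(_ kK); rewrite ltnn.
  by rewrite digit_eq0 ?mul0n // ltnW.
have -> : rho_star q rho i = from_digits q (fun k => digit q i (rho_inv k)) K.
  rewrite /rho_star /from_digits; under eq_bigr do rewrite -{1}[val _]rhoK.
  apply: (big_ord_reindex_bij _ rhoK rho_invK digit_free) => l il /=.
  by rewrite rhoK digit_eq0 ?mul0n // ltnW.
rewrite digit_from_digits //; last by move=> k; exact: ltn_digit.
by rewrite leq_max ltnSn orbT.
Qed.

Lemma rho_star_inj : injective (rho_star q rho).
Proof.
move=> a b eq_ab; apply: (eq_digits q_gt1) => j.
by rewrite -(rhoK j) -!digit_rho_star eq_ab.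
Qed.

Lemma rho_star0 : rho_star q rho 0 = 0.
Proof. by apply: (eq_digits q_gt1) => j; rewrite digit_rho_star !digit0. Qed.

Definition rho_star_inv (n : nat) : nat :=
  from_digits q (fun j => digit q n (rho j)) (\max_(k < n.+1) (rho_inv k).+1).

Lemma digit_rho_star_inv n j : digit q (rho_star_inv n) j = digit q n (rho j).
Proof.
rewrite digit_from_digits //; last by move=> k; exact: ltn_digit.
case: ltnP => // le_j; case: (ltnP (rho j) n.+1) => [lt_n|le_n].
  have := leq_bigmax (F := fun k : 'I_n.+1 => (rho_inv k).+1) (Ordinal lt_n).
  by rewrite /= rhoK => /leq_trans/(_ le_j); rewrite ltnn.
by rewrite digit_eq0 // ltnW.
Qed.

Lemma rho_star_invK : cancel rho_star_inv (rho_star q rho).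
Proof.
move=> n; apply: (eq_digits q_gt1) => j.
by rewrite digit_rho_star digit_rho_star_inv rho_invK.
Qed.

Lemma rho_starK : cancel (rho_star q rho) rho_star_inv.
Proof. by move=> i; apply: rho_star_inj; rewrite rho_star_invK. Qed.

Lemma rho_starB n k : (forall j, digit q k j <= digit q n j) ->
  rho_star q rho (n - k) = rho_star q rho n - rho_star q rho k.
Proof.
move=> k_le; apply: (eq_digits q_gt1) => j.
rewrite digitB //; last by move=> l; rewrite !digit_rho_star.
by rewrite !digit_rho_star digitB.
Qed.

End RhoStar.

Section Lucas.

Local Open Scope ring_scope.

Variables (R : comNzRingType) (p m : nat).
Hypotheses (p_pr : prime p) (p_char : p \in [pchar R]).
Local Notation q := (p ^ m)%N.

Lemma coef_1DX_exp n k : ((1 + 'X : {poly R}) ^+ n)`_k = ('C(n, k))%:R.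
Proof.
rewrite addrC exprD1n coef_sum.
transitivity (\sum_(i < n.+1 | i == k :> nat) (1 *+ 'C(n, i) : R)).
  rewrite [RHS]big_mkcond /=; apply: eq_bigr => i _.
  by rewrite coefMn coefXn eq_sym; case: (_ == _); rewrite ?mul0rn.
rewrite (big_ord1_eq _ (fun j => (1 *+ 'C(n, j) : R))).
by case: ltnP => // n_lt; rewrite bin_small.
Qed.

Lemma exp_1DX_pchar : (1 + 'X : {poly R}) ^+ q = 1 + 'X^q.
Proof. by rewrite exprDn_pchar ?expr1n // pnatX (pnatE _ p_pr) pchar_poly p_char. Qed.

Lemma bin_lucas_step a b c d : (a < q)%N -> (c < q)%N ->
  ('C(b * q + a, d * q + c))%:R = ('C(a, c))%:R * ('C(b, d))%:R :> R.
Proof.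
move=> a_lt c_lt; have q_gt0 : (0 < q)%N by rewrite expn_gt0 prime_gt0.
have expb : (1 + 'X^q : {poly R}) ^+ b = ((1 + 'X) ^+ b) \Po 'X^q.
  by rewrite rmorphXn rmorphD rmorph1 /= comp_polyX.
rewrite -!coef_1DX_exp exprD mulnC exprM exp_1DX_pchar expb mulrC coefM.
have c_le : (c < (d * q + c).+1)%N by rewrite ltnS leq_addl.
rewrite (bigD1 (Ordinal c_le)) //= big1 ?addr0.
  by rewrite coef_comp_poly_Xn // addnK dvdn_mull // mulnK.
move=> j /eqP j_neq; case: (ltnP a j) => [a_lt_j|j_le_a].
  by rewrite coef_1DX_exp bin_small // mul0r.
rewrite coef_comp_poly_Xn //; case: ifP => [q_dvd|]; last by rewrite mulr0.
have j_le : (j <= d * q + c)%N by rewrite -ltnS ltn_ord.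
case: j_neq; apply: val_inj => /=; apply/eqP.
move: q_dvd; rewrite -(eqn_mod_dvd _ j_le) modnMDl !modn_small 1?eq_sym //.
exact: leq_ltn_trans j_le_a a_lt.
Qed.

Lemma bin_lucas M n k : (n < q ^ M)%N -> (k < q ^ M)%N ->
  ('C(n, k))%:R = \prod_(j < M) ('C(digit q n j, digit q k j))%:R :> R.
Proof.
have q_gt0 : (0 < q)%N by rewrite expn_gt0 prime_gt0.
elim: M n k => [|M IH] n k.
  by rewrite big_ord0 expn0 !ltnS !leqn0 => /eqP-> /eqP->; rewrite bin0.
move=> n_lt k_lt; rewrite big_ord_recl /= !digit_ord0.
under eq_bigr do rewrite !digitS.
rewrite -IH ?ltn_divLR -?expnSr //.
by rewrite {1}(divn_eq n q) {1}(divn_eq k q) bin_lucas_step ?ltn_pmod.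
Qed.

Lemma bin_pchar_digit_eq0 n k j : (digit q n j < digit q k j)%N ->
  ('C(n, k))%:R = 0 :> R.
Proof.
move=> lt_j; have q_gt0 : (0 < q)%N by rewrite expn_gt0 prime_gt0.
have q_gt1 : (1 < q)%N.
  exact: leq_ltn_trans (leq_ltn_trans (leq0n _) lt_j) (ltn_pmod _ q_gt0).
set M := (n + k + j).+1.
have n_lt : (n < q ^ M)%N by rewrite leq_ltn_expl // ltnW // ltnS -addnA leq_addr.
have k_lt : (k < q ^ M)%N by rewrite leq_ltn_expl // ltnW // ltnS addnAC leq_addl.
have j_lt : (j < M)%N by rewrite ltnS leq_addl.
by rewrite (bin_lucas n_lt k_lt) (bigD1 (Ordinal j_lt)) //= bin_small // mul0r.
Qed.

End Lucas.

Section Pushforward.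

Local Open Scope ring_scope.

Variables (R : comNzRingType) (p m : nat) (rho rho_inv : nat -> nat).
Hypotheses (p_pr : prime p) (m_gt0 : (0 < m)%N) (p_char : p \in [pchar R]).
Hypotheses (rhoK : cancel rho rho_inv) (rho_invK : cancel rho_inv rho).
Local Notation q := (p ^ m)%N.
Local Notation rs := (rho_star q rho).

Let q_gt1 : (1 < q)%N. Proof. by rewrite (ltn_exp2l 0) ?prime_gt1. Qed.

Local Notation rs_inv := (rho_star_inv q rho rho_inv).
Let rsK := rho_starK q_gt1 rhoK rho_invK.
Let rs_invK := rho_star_invK q_gt1 rhoK rho_invK.
Let digit_rs := digit_rho_star q_gt1 rhoK rho_invK.

Lemma bin_rho_star n k : ('C(rs n, rs k))%:R = ('C(n, k))%:R :> R.
Proof.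
rewrite (@bin_lucas R p m p_pr p_char (rs n + rs k)) ?(leq_ltn_expl q_gt1) ?leq_addr ?leq_addl //.
rewrite (@bin_lucas R p m p_pr p_char (n + k)) ?(leq_ltn_expl q_gt1) ?leq_addr ?leq_addl //.
under eq_bigr do rewrite !digit_rs.
pose F j := ('C(digit q n j, digit q k j))%:R : R.
apply: (big_ord_reindex_bij (F := F) _ rho_invK rhoK) => [j|i] le_j.
  by rewrite /F !digit_eq0 ?bin0 // (leq_trans _ le_j) ?leq_addr ?leq_addl.
rewrite /F -!digit_rs !digit_eq0 ?bin0 //;
  by rewrite (leq_trans _ le_j) ?leq_addr ?leq_addl.
Qed.

Lemma mul_term_rho_star (a b : dps R) n k :
  ('C(rs n, rs k))%:R * a (rs_inv (rs k)) * b (rs_inv (rs n - rs k)%N)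
  = ('C(n, k))%:R * a k * b (n - k)%N.
Proof.
rewrite bin_rho_star rsK.
have [dom|] := boolP [forall j : 'I_(n + k), digit q k j <= digit q n j]%N.
  rewrite -(rho_starB q_gt1 rhoK rho_invK) ?rsK // => j.
  case: (ltnP j (n + k)) => [lt_j|le_j]; first exact: (forallP dom (Ordinal lt_j)).
  by rewrite !digit_eq0 // (leq_trans _ le_j) ?leq_addr ?leq_addl.
case/forallPn => j; rewrite -ltnNge => /(bin_pchar_digit_eq0 p_pr p_char)->.
by rewrite !mul0r.
Qed.

Definition rho_push (a : dps R) : dps R := fun n => a (rs_inv n).

Lemma rho_push_is_rho_map : is_rho_map q rho rho_push.
Proof. by move=> a i; rewrite /rho_push rsK. Qed.

Lemma eq_rho_push (F : dps R -> dps R) : is_rho_map q rho F -> F =1 rho_push.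
Proof.
move=> F_rho a; apply: functional_extensionality => n.
by rewrite -{1}[n]rs_invK F_rho.
Qed.

Lemma rho_pushM a b : rho_push (dps_mul a b) = dps_mul (rho_push a) (rho_push b).
Proof.
apply: functional_extensionality => N; rewrite /rho_push /dps_mul.
rewrite -[in RHS](rs_invK N); set n := rs_inv N.
pose G k := ('C(rs n, k))%:R * a (rs_inv k) * b (rs_inv (rs n - k)%N).
under eq_bigr do rewrite -(mul_term_rho_star a b n) -/(G (rs _)).
apply: (big_ord_reindex_bij _ rsK rs_invK) => [k|i] lt_k.
  by rewrite /G bin_small // !mul0r.
by rewrite /G mul_term_rho_star bin_small // !mul0r.
Qed.

Lemma rho_push1 : rho_push (dps_one R) = dps_one R.
Proof.
apply: functional_extensionality => n; rewrite /rho_push /dps_one.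
have rs_inv0 : rs_inv 0 = 0%N.
  by rewrite -[in LHS](rho_star0 q_gt1 rhoK rho_invK) rsK.
by rewrite -[X in rs_inv n == X]rs_inv0 (inj_eq (can_inj rs_invK)).
Qed.

Lemma rho_push_bij : bijective rho_push.
Proof.
exists (fun a i => a (rs i)) => a; apply: functional_extensionality => i.
  by rewrite /rho_push rsK.
by rewrite /rho_push rs_invK.
Qed.

Lemma rho_push_Ralg_automorphism : is_Ralg_automorphism rho_push.
Proof.
split; [by [] | by [] | exact: rho_pushM | exact: rho_push1 | exact: rho_push_bij].
Qed.

End Pushforward.

Unset Implicit Arguments.
Local Open Scope ring_scope.

Theorem proposition7p8 (R : comNzRingType) (p m0 : nat) (rho : nat -> nat) :
  prime p -> (0 < m0)%N -> p \in [pchar R] -> bijective rho ->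
  (exists F : dps R -> dps R, is_rho_map (p ^ m0) rho F) /\
  (forall F : dps R -> dps R, is_rho_map (p ^ m0) rho F ->
     is_Ralg_automorphism F).
Proof.
move=> p_pr m0_gt0 p_char [rho_inv rhoK rho_invK]; split.
  by exists (rho_push p m0 rho rho_inv); exact: rho_push_is_rho_map.
move=> F F_rho.
have -> := functional_extensionality _ _ (eq_rho_push p_pr m0_gt0 rhoK rho_invK F_rho).
exact: rho_push_Ralg_automorphism.
Qed.
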